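(* Let $m\ge2$, let $n\ge2$ be even, and $\epsilon\in\mathbb R$. Consider $2n$ parties on a ring (indices mod $2n$), each party $j$ holding values $M^{(j)}_0,\dots,M^{(j)}_{m-1}\in\{\pm1\}$. Define $$I^{(2n)}_{\mathrm{chain}}(\epsilon):=\sum_{j=0}^{2n-1}\big(1+(-1)^j\epsilon\big)\,I_{\mathrm{chain}}\big(M^{(j)},M^{(j+1)}\big).$$ Then $\min I^{(2n)}_{\mathrm{chain}}(\epsilon)=-4n(m-1)\max\{1,|\epsilon|\}$, the minimum being over all assignments of $\pm1$ values to all $M^{(j)}_k$.
   Context: For vectors $A=(A_0,\dots,A_{m-1})$, $B=(B_0,\dots,B_{m-1})\in\{\pm1\}^m$ the chained Bell expression is $I_{\mathrm{chain}}(A,B):=\sum_{i=0}^{m-1}\big(A_{m-i-2}B_i+A_{m-i-1}B_i\big)$, with the convention $A_{-1}:=-A_{m-1}$ (so for $m=2$ it is the CHSH expression $A_0B_0+A_0B_1+A_1B_0-A_1B_1$). In $I_{\mathrm{chain}}(M^{(j)},M^{(j+1)})$ party $j$ plays the role of $A$ and party $j+1$ the role of $B$. *)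

From HB Require Import structures.
From mathcomp Require Import all_boot all_order all_algebra.
Set Implicit Arguments. Unset Strict Implicit. Unset Printing Implicit Defensive.
Import Order.TTheory GRing.Theory Num.Theory.
Local Open Scope ring_scope.

(* Chained Bell expression with m settings:
   sum_{i<m} (A_{m-i-2} B_i + A_{m-i-1} B_i), with A_{-1} := - A_{m-1}.
   The index m-i-2 equals -1 exactly when i = m-1, i.e. when ~~ (i.+2 <= m). *)
Definition Ichain (R : pzRingType) (m : nat) (A B : nat -> R) : R :=
  \sum_(i < m)
    ((if (i.+2 <= m)%N then A (m - i.+2)%N else - A m.-1) * B i
     + A (m - i.+1)%N * B i).

Definition Ichain2n (R : pzRingType) (n m : nat) (eps : R)
    (M : nat -> nat -> R) : R :=
  \sum_(j < 2 * n)
    (1 + (-1) ^+ j * eps) * Ichain m (M j) (M ((j.+1) %% (2 * n))%N).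

Definition pm1_assignment (R : pzRingType) (n m : nat) (M : nat -> nat -> R) :=
  forall j k, (j < 2 * n)%N -> (k < m)%N -> M j k = 1 \/ M j k = -1.

From HB Require Import structures.
From mathcomp Require Import all_boot all_order all_algebra.
From mathcomp Require Import ring lra.
Import Order.TTheory GRing.Theory Num.Theory.
Local Open Scope ring_scope.

(* Each summand I_chain(M^(j), M^(j+1)) has absolute value at most 2(m-1): after
   splitting off the wrap-around term B_{m-1} (A_0 - A_{m-1}), every other term is
   bounded by |A_k + A_{k+1}| = 2 - |A_k - A_{k+1}|, and the triangle inequality along
   A_0, ..., A_{m-1} absorbs |A_0 - A_{m-1}|.  The weights 1 +- eps alternate, so their
   absolute values add up to n (|1 + eps| + |1 - eps|) = 2n max(1, |eps|).
   The bound is attained by giving all settings of party j one common sign c_j, where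
   s_j = c_j c_{j+1} is opposite to the sign of the j-th weight.  Taking c_j to be the
   prefix products of the s_j closes up around the ring exactly when the s_j multiply
   to 1; as s_j depends only on the parity of j, that product is (s_0 s_1)^n = 1 for
   n even. *)

Lemma big_ord_pairs {R : Type} {idx : R} (op : Monoid.law idx) n (F : nat -> R) :
  \big[op/idx]_(j < 2 * n) F j = \big[op/idx]_(i < n) op (F (2 * i)%N) (F (2 * i).+1).
Proof.
elim: n => [|n IHn]; first by rewrite muln0 !big_ord0.
by rewrite mulnSr addn2 !big_ord_recr IHn /= Monoid.mulmA.
Qed.

Lemma normrD_normrB (R : realDomainType) (x y : R) :
  `|x + y| + `|x - y| = 2 * Num.max `|x| `|y|.
Proof.
rewrite !normrEsign.
case: (ltrP x 0) => ?; case: (ltrP y 0) => ?;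
case: (ltrP (x + y) 0) => ?; case: (ltrP (x - y) 0) => ?;
rewrite /Num.max ?expr0 ?expr1 ?mul1r ?mulN1r; case: ltP; lra.
Qed.

Section ChainedBell.
Variable R : realDomainType.
Implicit Types (A B a : nat -> R) (c d : R).

Lemma IchainS k A B :
  Ichain k.+1 A B = \sum_(i < k) (A (k - i.+1)%N + A (k - i)%N) * B i + (A 0%N - A k) * B k.
Proof.
rewrite /Ichain big_ord_recr /= ltnn subnn [X in _ + X]addrC -mulrDl.
congr (_ + _); apply: eq_bigr => i _.
by rewrite ltnS ltn_ord !subSS mulrDl.
Qed.

Lemma Ichain_const m c d :
  Ichain m (fun=> c) (fun=> d) = (2 * (m - 1))%:R * (c * d).
Proof.
case: m => [|k]; first by rewrite /Ichain big_ord0 mul0r.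
rewrite IchainS subrr mul0r addr0 subSS subn0.
rewrite (eq_bigr (fun=> (c * d) *+ 2)) => [|i _]; last by rewrite mulr2n mulrDl.
rewrite sumr_const card_ord.
by rewrite -mulrnA mulr_natl mulnC.
Qed.

Lemma sum_normD_adjacent_le a k : (forall j, (j <= k)%N -> `|a j| = 1) ->
  \sum_(j < k) `|a j + a j.+1| + `|a 0%N - a k| <= (2 * k)%:R.
Proof.
move=> a1.
have normD_adj j : (j < k)%N -> `|a j + a j.+1| = 2 - `|a j - a j.+1|.
  move=> ltjk; apply/eqP; rewrite eq_sym subr_eq normrD_normrB.
  by rewrite !a1 ?(ltnW ltjk) // maxxx mulr1.
have telescope : a 0%N - a k = \sum_(j < k) (a j - a j.+1).
  rewrite -opprB -(telescope_sumr _ (leq0n k)) big_mkord -sumrN.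
  by apply: eq_bigr => j _; rewrite opprB.
rewrite (eq_bigr (fun j : 'I_k => 2 - `|a j - a j.+1|)); last by move=> j _; exact: normD_adj.
rewrite sumrB sumr_const card_ord telescope mulrnA -addrA gerDl addrC subr_le0.
exact: ler_norm_sum.
Qed.

Lemma Ichain_norm_le m A B :
  (forall i, (i < m)%N -> `|A i| = 1) -> (forall i, (i < m)%N -> `|B i| = 1) ->
  `|Ichain m A B| <= (2 * (m - 1))%:R.
Proof.
case: m => [|k] A1 B1; first by rewrite /Ichain big_ord0 normr0.
rewrite IchainS subSS subn0.
have normB i : (i < k.+1)%N -> forall x, `|x * B i| = `|x|.
  by move=> /B1 Bi x; rewrite normrM Bi mulr1.
have reindex : \sum_(i < k) `|A (k - i.+1)%N + A (k - i)%N| = \sum_(j < k) `|A j + A j.+1|.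
  rewrite -(big_mkord xpredT (fun j => `|A j + A j.+1|)) big_rev_mkord subn0.
  by apply: eq_bigr => i _; rewrite subnSK.
apply: le_trans (ler_normD _ _) _.
rewrite normB //.
apply: le_trans (lerD (ler_norm_sum _ _ _) (lexx _)) _.
rewrite (eq_bigr (fun i : 'I_k => `|A (k - i.+1)%N + A (k - i)%N|)); last first.
  by move=> i _; rewrite normB // ltnS ltnW.
by rewrite reindex; apply: sum_normD_adjacent_le => j; rewrite -ltnS; apply: A1.
Qed.
End ChainedBell.

Section PrefixProducts.
Variables (R : comPzRingType) (s : nat -> R).
Hypothesis s_sqr : forall i, s i * s i = 1.

Lemma prefix_prod_mulS j : (\prod_(i < j) s i) * \prod_(i < j.+1) s i = s j.
Proof.
by rewrite big_ord_recr /= mulrA -big_split /= big1 ?mul1r.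
Qed.

Lemma prefix_prod_mulS_mod N j : \prod_(i < N) s i = 1 -> (j < N)%N ->
  (\prod_(i < j) s i) * \prod_(i < j.+1 %% N) s i = s j.
Proof.
move=> sN1; rewrite -prefix_prod_mulS leq_eqVlt => /predU1P [eqSN|ltSN].
  by rewrite eqSN modnn big_ord0 sN1.
by rewrite modn_small.
Qed.

End PrefixProducts.

Lemma mulr_sign_ge0 (R : realDomainType) (x : R) : x * (-1) ^+ (0 <= x)%R = - `|x|.
Proof.
by case: (lerP 0 x) => hx; rewrite ?mulrN1 ?mulr1 ?(ger0_norm hx) ?(ltr0_norm hx) ?opprK.
Qed.

Section RingOfParties.
Variables (R : realDomainType) (n m : nat) (eps : R).

Lemma sum_norm_weights :
  \sum_(j < (2 * n)%N) `|1 + (-1) ^+ j * eps| = (2 * n)%:R * Num.max 1 `|eps|.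
Proof.
rewrite (big_ord_pairs +%R _ (fun j => `|1 + (-1) ^+ j * eps|)).
rewrite (eq_bigr (fun=> 2 * Num.max 1 `|eps|)); last first.
  by move=> i _ /=; rewrite exprS exprM sqrrN !expr1n mul1r mulr1 mulN1r normrD_normrB normr1.
by rewrite sumr_const card_ord mulrnAl -mulrnA mul1r mulr_natl.
Qed.

Lemma Ichain2n_ge M : pm1_assignment n m M ->
  - (4 * n * (m - 1))%:R * Num.max 1 `|eps| <= Ichain2n n m eps M.
Proof.
move=> pmM.
have M1 j k : (j < 2 * n)%N -> (k < m)%N -> `|M j k| = 1.
  by move=> ltj ltk; case: (pmM j k ltj ltk) => ->; rewrite ?normrN normr1.
have -> : - (4 * n * (m - 1))%:R * Num.max 1 `|eps| =
    \sum_(j < (2 * n)%N) - (`|1 + (-1) ^+ j * eps| * (2 * (m - 1))%:R).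
  by rewrite sumrN -mulr_suml sum_norm_weights !natrM; ring.
apply: ler_sum => j _.
have normI : `|Ichain m (M j) (M (j.+1 %% (2 * n))%N)| <= (2 * (m - 1))%:R.
  apply: Ichain_norm_le => k ltk; apply: M1 => //.
  by rewrite ltn_pmod // (leq_ltn_trans (leq0n j) (ltn_ord j)).
by apply: lerNnormlW; rewrite normrM ler_wpM2l.
Qed.

Lemma Ichain2n_attained : ~~ odd n -> exists M, pm1_assignment n m M /\
  Ichain2n n m eps M = - (4 * n * (m - 1))%:R * Num.max 1 `|eps|.
Proof.
move=> even_n.
pose w j := 1 + (-1) ^+ j * eps.
pose s j : R := (-1) ^+ (0 <= w j)%R.
have s_pm1 i : s i = 1 \/ s i = -1 by rewrite /s; case: (0 <= _); [right|left].
have s_sqr i : s i * s i = 1 by case: (s_pm1 i) => ->; rewrite ?mulrNN mulr1.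
have s_even i : s (2 * i)%N = s 0%N by rewrite /s /w exprM sqrrN !expr1n.
have s_odd i : s (2 * i).+1 = s 1%N by rewrite /s /w exprS exprM sqrrN !expr1n mulr1.
have s_prod : \prod_(i < (2 * n)%N) s i = 1.
  rewrite (big_ord_pairs *%R _ s) (eq_bigr (fun=> s 0%N * s 1%N)) => [|i _]; last first.
    by rewrite s_even s_odd.
  have sqr1 : (s 0%N * s 1%N) ^+ 2 = 1 by rewrite expr2 mulrACA !s_sqr mulr1.
  rewrite prodr_const card_ord -(odd_double_half n) (negbTE even_n) add0n -mul2n.
  by rewrite exprM sqr1 expr1n.
pose c j := \prod_(i < j) s i.
exists (fun j _ => c j); split.
  move=> j k _ _; apply: (big_ind (fun x : R => x = 1 \/ x = -1)) => [|x y|i _].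
  - by left.
  - by case=> ->; case=> ->; rewrite ?mulr1 ?mulrN1 ?opprK; [left|right|right|left].
  - exact: s_pm1.
rewrite /Ichain2n (eq_bigr (fun j : 'I_(2 * n) => (2 * (m - 1))%:R * - `|w j|)) => [|j _].
  by rewrite -mulr_sumr sumrN sum_norm_weights !natrM; ring.
by rewrite Ichain_const prefix_prod_mulS_mod // mulrCA mulr_sign_ge0.
Qed.

End RingOfParties.

Theorem mainTheorem9 (R : realFieldType) (m n : nat) (eps : R)
    (hm : (2 <= m)%N) (hn : (2 <= n)%N) (hne : ~~ odd n) :
  (exists M : nat -> nat -> R, pm1_assignment n m M /\
     Ichain2n n m eps M = - (4 * n * (m - 1))%:R * Num.max 1 `|eps|) /\
  (forall M : nat -> nat -> R, pm1_assignment n m M ->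
     - (4 * n * (m - 1))%:R * Num.max 1 `|eps| <= Ichain2n n m eps M).
Proof.
split; first exact: Ichain2n_attained.
exact: Ichain2n_ge.
Qed.
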